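(* Let $\mathbf L=(L,\le,\wedge,\vee,0,1,\nu)$ be a bounded lattice with an antitone map $\nu$, and let $\mathbb V$ be one of the varieties $\mathbb M,\mathbb G,\mathbb{INV},\mathbb{DMA},\mathbb O,\mathbb{BA}$. If $\mathbf L\in\mathbb V$, then the full complex algebra $(\mathcal G(X),\subseteq,\bigcap,\bigvee,\emptyset,X,(\cdot)^* )$ of its canonical frame (which is a canonical extension of $\mathbf L$ with $(\cdot)^*$ the $\pi$-extension of $\nu$) also belongs to $\mathbb V$. Thus each of these varieties is closed under canonical extensions.
   Context: Varieties: $\mathbb M$: bounded lattices with antitone $\nu$, $\nu0=1$, $\nu(a\vee b)=\nu a\wedge\nu b$; $\mathbb G$: $\mathbb M$ plus $a\le\nu\nu a$; $\mathbb{INV}$: $\nu$ an antitone involution ($\nu\nu a=a$); $\mathbb{DMA}$: $\mathbb{INV}$ plus distributivity (De Morgan algebras); $\mathbb O$: $\mathbb{INV}$ plus $a\wedge\nu a=0$ (ortholattices); $\mathbb{BA}$: Boolean algebras with $\nu$ the complement. Canonical frame of $\mathbf L$: $X$ the proper filters, $Y$ the proper ideals, $x\parallel y$ iff $x\cap y\neq\emptyset$; $\widehat\nu(x)$ is the ideal generated by $\{\nu a:a\in x\}$; $yS_\vee x$ iff $\widehat\nu(x)\subseteq y$. For $U\subseteq X$, $U'=\{y:\forall x\in U\;x\parallel y\}$; for $V\subseteq Y$, $V'=\{x:\forall y\in V\;x\parallel y\}$; $\mathcal G(X)=\{A\subseteq X:A=A''\}$ with meets = intersections, joins $(\bigcup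 A_j)''$. $x\perp z$ iff $\forall y(yS_\vee z\Rightarrow x\parallel y)$; $A^*=\{x:\forall z\in A\;x\perp z\}$. *)

From mathcomp Require Import all_boot all_order.
Set Implicit Arguments. Unset Strict Implicit. Unset Printing Implicit Defensive.
Import Order.TTheory.
Local Open Scope order_scope.

Record bounded_lattice (T : Type) (C : T -> Prop) (le : T -> T -> Prop)
    (meet join : T -> T -> T) (bot top : T) : Prop := {
  bl_bot : C bot;
  bl_top : C top;
  bl_meetC : forall a b, C a -> C b -> C (meet a b);
  bl_joinC : forall a b, C a -> C b -> C (join a b);
  bl_refl : forall a, C a -> le a a;
  bl_anti : forall a b, C a -> C b -> le a b -> le b a -> a = b;
  bl_trans : forall a b c, C a -> C b -> C c -> le a b -> le b c -> le a c;
  bl_meetl : forall a b, C a -> C b -> le (meet a b) a;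
  bl_meetr : forall a b, C a -> C b -> le (meet a b) b;
  bl_meetg : forall a b c, C a -> C b -> C c -> le c a -> le c b -> le c (meet a b);
  bl_joinl : forall a b, C a -> C b -> le a (join a b);
  bl_joinr : forall a b, C a -> C b -> le b (join a b);
  bl_joinl_ : forall a b c, C a -> C b -> C c -> le a c -> le b c -> le (join a b) c;
  bl_botP : forall a, C a -> le bot a;
  bl_topP : forall a, C a -> le a top
}.

Inductive variety := VM | VG | VINV | VDMA | VO | VBA.

Definition nu_closed (T : Type) (C : T -> Prop) (nu : T -> T) :=
  forall a, C a -> C (nu a).

Definition distributive_on (T : Type) (C : T -> Prop) (meet join : T -> T -> T) :=
  forall a b c, C a -> C b -> C c -> meet a (join b c) = join (meet a b) (meet a c).

Definition M_axioms (T : Type) (C : T -> Prop) (le : T -> T -> Prop)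
    (meet join : T -> T -> T) (bot top : T) (nu : T -> T) : Prop :=
  nu_closed C nu /\
  (forall a b, C a -> C b -> le a b -> le (nu b) (nu a)) /\
  nu bot = top /\
  (forall a b, C a -> C b -> nu (join a b) = meet (nu a) (nu b)).

Definition in_variety (V : variety) (T : Type) (C : T -> Prop)
    (le : T -> T -> Prop) (meet join : T -> T -> T) (bot top : T)
    (nu : T -> T) : Prop :=
  bounded_lattice C le meet join bot top /\
  match V with
  | VM => M_axioms C le meet join bot top nu
  | VG => M_axioms C le meet join bot top nu /\
          (forall a, C a -> le a (nu (nu a)))
  | VINV => M_axioms C le meet join bot top nu /\
          (forall a, C a -> nu (nu a) = a)
  | VDMA => M_axioms C le meet join bot top nu /\
          (forall a, C a -> nu (nu a) = a) /\ distributive_on C meet join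
  | VO => M_axioms C le meet join bot top nu /\
          (forall a, C a -> nu (nu a) = a) /\
          (forall a, C a -> meet a (nu a) = bot)
  | VBA => nu_closed C nu /\ distributive_on C meet join /\
          (forall a, C a -> meet a (nu a) = bot /\ join a (nu a) = top)
  end.

Section Frame.
Context {d : Order.disp_t} {L : tbLatticeType d}.

Definition is_filter (x : L -> Prop) : Prop :=
  x \top /\ (forall a b, x a -> a <= b -> x b) /\
  (forall a b, x a -> x b -> x (a `&` b)).
Definition is_ideal (y : L -> Prop) : Prop :=
  y \bot /\ (forall a b, y b -> a <= b -> y a) /\
  (forall a b, y a -> y b -> y (a `|` b)).

Definition proper_filter (x : L -> Prop) := is_filter x /\ ~ x \bot.
Definition proper_ideal (y : L -> Prop) := is_ideal y /\ ~ y \top.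

Definition FX := {x : L -> Prop | proper_filter x}.
Definition FY := {y : L -> Prop | proper_ideal y}.

Definition par (x : FX) (y : FY) : Prop :=
  exists a, proj1_sig x a /\ proj1_sig y a.

Definition gen_ideal (S : L -> Prop) : L -> Prop :=
  fun b => forall I, is_ideal I -> (forall c, S c -> I c) -> I b.

Definition nuhat (nu : L -> L) (x : FX) : L -> Prop :=
  gen_ideal (fun c => exists a, proj1_sig x a /\ c = nu a).

Definition Svee (nu : L -> L) (y : FY) (x : FX) : Prop :=
  forall b, nuhat nu x b -> proj1_sig y b.

Definition primeX (U : FX -> Prop) : FY -> Prop :=
  fun y => forall x, U x -> par x y.
Definition primeY (V : FY -> Prop) : FX -> Prop :=
  fun x => forall y, V y -> par x y.

Definition stable (A : FX -> Prop) : Prop := A = primeY (primeX A).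

Definition perp (nu : L -> L) (x z : FX) : Prop :=
  forall y, Svee nu y z -> par x y.

Definition gstar (nu : L -> L) (A : FX -> Prop) : FX -> Prop :=
  fun x => forall z, A z -> perp nu x z.

Definition gsub (A B : FX -> Prop) : Prop := forall x, A x -> B x.
Definition gmeet (A B : FX -> Prop) : FX -> Prop := fun x => A x /\ B x.
Definition gjoin (A B : FX -> Prop) : FX -> Prop :=
  primeY (primeX (fun x => A x \/ B x)).
Definition gbot : FX -> Prop := fun _ => False.
Definition gtop : FX -> Prop := fun _ => True.

End Frame.

(* The key fact is that [x ⊥ z] holds iff [x] contains [ν c] for some [c ∈ z].
   When [ν] satisfies the M-laws, the preimage [ν⁻¹[x]] of a proper filter
   not containing [ν ⊤] is a proper ideal, so [(·)*] turns the closure of a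
   union into an intersection.  When [ν] is an involution, the preimage
   [ν⁻¹[y]] of a proper ideal is a proper filter, perpendicular to [A] exactly
   when [y] misses [A]; this gives [A** = A] and, with complements,
   [A ∨ A* = X].  Over a distributive [L], the filter generated by two proper
   filters stays proper as long as it avoids a suitable residual ideal, which
   gives distributivity of the stable sets. *)
From Stdlib Require Import Classical FunctionalExtensionality PropExtensionality.
From mathcomp Require Import all_boot all_order.

Import Order.TTheory.
Local Open Scope order_scope.

Lemma pred_ext (T : Type) (A B : T -> Prop) : (forall t, A t <-> B t) -> A = B.
Proof.
move=> AB; apply: functional_extensionality => t.
exact: propositional_extensionality.
Qed.

Section CanonicalFrame.
Context {d : Order.disp_t} {L : tbLatticeType d}.
Implicit Types (x z : @FX d L) (y : @FY d L) (A B C U W : @FX d L -> Prop).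

Local Notation closure U := (primeY (primeX U)).

Lemma filter_top x : proj1_sig x \top.
Proof. by case: x => P /= [[top _] _]. Qed.

Lemma filter_up x a b : proj1_sig x a -> a <= b -> proj1_sig x b.
Proof. by case: x => P /= [[_ [up _]] _]; apply: up. Qed.

Lemma filter_meet x a b :
  proj1_sig x a -> proj1_sig x b -> proj1_sig x (a `&` b).
Proof. by case: x => P /= [[_ [_ meet]] _]; apply: meet. Qed.

Lemma filter_nbot x : ~ proj1_sig x \bot.
Proof. by case: x => P /= [_ nbot]. Qed.

Lemma ideal_bot y : proj1_sig y \bot.
Proof. by case: y => P /= [[bot _] _]. Qed.

Lemma ideal_down y a b : proj1_sig y b -> a <= b -> proj1_sig y a.
Proof. by case: y => P /= [[_ [down _]] _]; apply: down. Qed.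

Lemma ideal_join y a b :
  proj1_sig y a -> proj1_sig y b -> proj1_sig y (a `|` b).
Proof. by case: y => P /= [[_ [_ join]] _]; apply: join. Qed.

Lemma ideal_ntop y : ~ proj1_sig y \top.
Proof. by case: y => P /= [_ ntop]. Qed.

Lemma subset_closure U : gsub U (closure U).
Proof. by move=> x Ux y; apply. Qed.

Lemma closure_mono U W : gsub U W -> gsub (closure U) (closure W).
Proof. by move=> UW x clUx y Wy; apply: clUx => x' /UW; apply: Wy. Qed.

Lemma closure_stable U : stable (closure U).
Proof.
apply: pred_ext => x; split; first exact: subset_closure.
by move=> clx y Uy; apply: clx => x' /(_ y Uy).
Qed.

Lemma closure_min U A : stable A -> gsub U A -> gsub (closure U) A.
Proof. by move=> sA /closure_mono UA x /UA; rewrite -sA. Qed.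

Lemma stable_up A x x' : stable A -> A x ->
  (forall a, proj1_sig x a -> proj1_sig x' a) -> A x'.
Proof.
move=> sA Ax xx'; rewrite sA => y /(_ x Ax) [a [xa ya]].
by exists a; split; first exact: xx'.
Qed.

(* The principal ideal of [⊥] is proper as soon as some proper filter exists,
   and no proper filter meets it. *)
Lemma stable_gbot : stable (@gbot d L).
Proof.
apply: pred_ext => x; split=> // clx.
have bot_ideal : proper_ideal (fun b : L => b <= \bot).
  split; first split=> [|]; first exact: lexx.
  - split=> [a b ? ab|a b ? ?]; first exact: le_trans ab _.
    by rewrite leUx; apply/andP.
  - by move=> top_bot; apply: (filter_nbot x); apply: filter_up (filter_top x) _.
have [a [xa /= a_bot]] := clx (exist _ _ bot_ideal) (fun _ => False_ind _).
by apply: (filter_nbot x); apply: filter_up xa a_bot.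
Qed.

Lemma complex_bounded_lattice :
  bounded_lattice (@stable d L) (@gsub d L) (@gmeet d L) (@gjoin d L)
    (@gbot d L) (@gtop d L).
Proof.
split.
- exact: stable_gbot.
- by apply: pred_ext => x; split=> // _ y; apply.
- move=> A B sA sB; apply: pred_ext => x; split; first exact: subset_closure.
  move=> clx; split; [rewrite sA|rewrite sB].
  + by apply: closure_mono clx => ? [].
  + by apply: closure_mono clx => ? [].
- by move=> A B _ _; apply: closure_stable.
- by move=> A _ x.
- by move=> A B _ _ AB BA; apply: pred_ext => x; split; [apply: AB|apply: BA].
- by move=> A B C _ _ _ AB BC x /AB /BC.
- by move=> A B _ _ x [].
- by move=> A B _ _ x [].
- by move=> A B C _ _ _ CA CB x Cx; split; [apply: CA|apply: CB].
- by move=> A B _ _ x Ax; apply: subset_closure; left.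
- by move=> A B _ _ x Bx; apply: subset_closure; right.
- by move=> A B C _ _ sC AC BC; apply: closure_min sC _ => x [/AC|/BC].
- by move=> A _ x.
- by move=> A _ x.
Qed.

Definition filter_join (F G : L -> Prop) : L -> Prop :=
  fun c => exists a b, F a /\ G b /\ a `&` b <= c.

Lemma filter_join_is_filter x z :
  is_filter (filter_join (proj1_sig x) (proj1_sig z)).
Proof.
split; first by exists \top, \top; rewrite lex1; do !split; apply: filter_top.
split=> [c c' [a [b [xa [zb ab_c]]]] cc'|c c' [a [b [xa [zb ab_c]]]]].
  by exists a, b; do !split=> //; apply: le_trans ab_c cc'.
move=> [a' [b' [xa' [zb' ab_c']]]].
exists (a `&` a'), (b `&` b'); do !split; try exact: filter_meet.
rewrite lexI meetACA.
by rewrite (le_trans (leIl _ _) ab_c) (le_trans (leIr _ _) ab_c').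
Qed.

Lemma filter_join_l (F G : L -> Prop) a : G \top -> F a -> filter_join F G a.
Proof. by move=> Gtop Fa; exists a, \top; rewrite meetx1. Qed.

Lemma filter_join_r (F G : L -> Prop) b : F \top -> G b -> filter_join F G b.
Proof. by move=> Ftop Gb; exists \top, b; rewrite meet1x. Qed.

Definition residual (F I : L -> Prop) : L -> Prop :=
  fun b => exists a, F a /\ I (a `&` b).

Section Distributive.
Hypothesis meetUr : forall a b c : L, a `&` (b `|` c) = (a `&` b) `|` (a `&` c).

Lemma residual_proper_ideal x y :
  ~ par x y -> proper_ideal (residual (proj1_sig x) (proj1_sig y)).
Proof.
move=> xny; split; last first.
  move=> [a [xa ya]]; apply: (xny); exists a; split=> //.
  by rewrite -[a]meetx1.
split; first by exists \top; rewrite meetx0; split; [apply: filter_top|apply: ideal_bot].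
split=> [b b' [a [xa yab]] bb'|b b' [a [xa yab]] [a' [xa' ya'b']]].
  by exists a; split=> //; apply: ideal_down yab _; rewrite leI2.
exists (a `&` a'); split; first exact: filter_meet.
rewrite meetUr; apply: ideal_join.
- by apply: ideal_down yab _; rewrite leI2 ?leIl.
- by apply: ideal_down ya'b' _; rewrite leI2 ?leIr.
Qed.

(* If [x ∈ A] misses [y ∈ ((A ∩ B) ∪ (A ∩ C))'], the residual ideal of [y]
   by [x] misses [x] and meets every [z ∈ B ∪ C]: otherwise the filter
   generated by [x] and [z] would be proper, lie in [A ∩ B] or [A ∩ C], and
   still miss [y]. *)
Lemma complex_distributive :
  distributive_on (@stable d L) (@gmeet d L) (@gjoin d L).
Proof.
move=> A B C sA sB sC; apply: pred_ext => x; split; last first.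
  move=> clx; split.
  - by apply: closure_min sA _ x clx => w [[]|[]].
  - by apply: closure_mono clx => w [[_ ?]|[_ ?]]; [left|right].
move=> [Ax clBCx] y y_sep; apply: NNPP => xny.
pose Y := exist _ _ (residual_proper_ideal x y xny).
suff /clBCx [b [xb [a [xa yab]]]] : primeX (fun w => B w \/ C w) Y.
  by apply: (xny); exists (a `&` b); split=> //; apply: filter_meet.
move=> z BCz; apply: NNPP => znY.
have xz_proper : ~ filter_join (proj1_sig x) (proj1_sig z) \bot.
  move=> [a [b [xa [zb ab0]]]]; apply: (znY); exists b; split=> //.
  by exists a; split=> //; apply: ideal_down (ideal_bot y) ab0.
pose xz := exist proper_filter _ (conj (filter_join_is_filter x z) xz_proper).
have x_xz a : proj1_sig x a -> proj1_sig xz a.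
  exact/filter_join_l/filter_top.
have z_xz b : proj1_sig z b -> proj1_sig xz b.
  exact/filter_join_r/filter_top.
have Axz : A xz by apply: stable_up sA Ax x_xz.
have [c [[a [b [xa [zb abc]]]] yc]] : par xz y.
  apply: y_sep; case: BCz => [Bz|Cz]; [left|right]; split=> //.
  - exact: stable_up sB Bz z_xz.
  - exact: stable_up sC Cz z_xz.
by apply: (znY); exists b; split=> //; exists a; split=> //; apply: ideal_down yc abc.
Qed.

End Distributive.

Section Star.
Variable nu : L -> L.
Hypothesis nu_anti : {homo nu : a b /~ a <= b}.

Lemma gstar_stable A : stable (gstar nu A).
Proof.
apply: pred_ext => x; split; first exact: subset_closure.
by move=> clx z Az y yz; apply: clx => x' /(_ z Az); apply.
Qed.

(* [E] below is the ideal generated by [ν[z]], i.e. the least [y] with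
   [y S∨ z]. *)
Lemma perp_exists x z :
  perp nu x z <-> exists2 c, proj1_sig z c & proj1_sig x (nu c).
Proof.
split=> [x_perp_z|[c zc xnc] y yz]; last first.
  by exists (nu c); split=> //; apply: yz => I _; apply; exists c.
apply: NNPP => no_c.
pose E := fun b : L => exists2 c, proj1_sig z c & b <= nu c.
have E_proper : proper_ideal E.
  split; last first.
    move=> [c zc top_nc]; apply: no_c; exists c => //.
    exact: filter_up (filter_top x) top_nc.
  split; first by exists \top; [apply: filter_top|apply: le0x].
  split=> [b b' [c zc b_nc] bb'|b b' [c zc b_nc] [c' zc' b_nc']].
    by exists c => //; apply: le_trans bb' b_nc.
  exists (c `&` c'); first exact: filter_meet.
  rewrite leUx (le_trans b_nc (nu_anti _ _ (leIl _ _))).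
  exact: le_trans b_nc' (nu_anti _ _ (leIr _ _)).
have [|b [xb [c zc b_nc]]] := x_perp_z (exist _ E E_proper).
  move=> b; apply; first exact: (proj1 E_proper).
  by move=> _ [a [za ->]]; exists a.
by apply: no_c; exists c => //; apply: filter_up xb b_nc.
Qed.

Lemma sub_gstar_gstar (nu_extensive : forall a, a <= nu (nu a)) A :
  gsub A (gstar nu (gstar nu A)).
Proof.
move=> x Ax z /(_ x Ax) /perp_exists [c xc znc]; apply/perp_exists.
by exists (nu c) => //; apply: filter_up xc _.
Qed.

Lemma gstar_meet_gbot (nu_compl : forall a, a `&` nu a = \bot) A :
  gmeet A (gstar nu A) = gbot.
Proof.
apply: pred_ext => x; split=> // [[Ax /(_ x Ax) /perp_exists [c xc xnc]]].
by apply: (filter_nbot x); rewrite -(nu_compl c); apply: filter_meet.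
Qed.

Hypothesis nu_bot : nu \bot = \top.
Hypothesis nu_join : forall a b, nu (a `|` b) = nu a `&` nu b.

Lemma nu_preimage_ideal x :
  ~ proj1_sig x (nu \top) -> proper_ideal (fun c => proj1_sig x (nu c)).
Proof.
move=> xntop; split=> //; split; first by rewrite nu_bot; apply: filter_top.
split=> [a b xnb ab|a b xna xnb]; first exact: filter_up xnb (nu_anti _ _ ab).
by rewrite nu_join; apply: filter_meet.
Qed.

(* If [x] is not perpendicular to [z] then [ν ⊤ ∉ x], so [ν⁻¹[x]] is a
   proper ideal; it meets every member of [U], hence also [z]. *)
Lemma gstar_closure U : gsub (gstar nu U) (gstar nu (closure U)).
Proof.
move=> x Ux z clUz; apply/perp_exists; apply: NNPP => no_c.
have xntop : ~ proj1_sig x (nu \top).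
  by move=> ?; apply: no_c; exists \top => //; apply: filter_top.
have [|c [zc xnc]] := clUz (exist _ _ (nu_preimage_ideal x xntop)).
  by move=> z' /Ux /perp_exists [c z'c xnc]; exists c.
by apply: no_c; exists c.
Qed.

Lemma complex_M_axioms :
  M_axioms (@stable d L) (@gsub d L) (@gmeet d L) (@gjoin d L)
    (@gbot d L) (@gtop d L) (gstar nu).
Proof.
split; first by move=> A _; apply: gstar_stable.
split; first by move=> A B _ _ AB x Ax z /AB; apply: Ax.
split; first by apply: pred_ext => x; split=> // _ z.
move=> A B _ _; apply: pred_ext => x; split.
  by move=> x_perp; split=> z Xz; apply/x_perp/subset_closure; [left|right].
by move=> [xA xB]; apply: gstar_closure => z [/xA|/xB].
Qed.

Hypothesis nu_inv : forall a, nu (nu a) = a.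

Lemma nu_top : nu \top = \bot.
Proof. by rewrite -nu_bot nu_inv. Qed.

Lemma nu_meet a b : nu (a `&` b) = nu a `|` nu b.
Proof. by rewrite -[in LHS](nu_inv a) -[in LHS](nu_inv b) -nu_join nu_inv. Qed.

Lemma nu_preimage_filter y : proper_filter (fun c => proj1_sig y (nu c)).
Proof.
split; last by rewrite nu_bot; apply: ideal_ntop.
split; first by rewrite nu_top; apply: ideal_bot.
split=> [a b yna ab|a b yna ynb]; first exact: ideal_down yna (nu_anti _ _ ab).
by rewrite nu_meet; apply: ideal_join.
Qed.

Lemma nu_preimage_in_gstar {y U} :
  primeX U y -> gstar nu U (exist _ _ (nu_preimage_filter y)).
Proof.
move=> yU w /yU [c [wc yc]]; apply/perp_exists.
by exists c => //=; rewrite nu_inv.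
Qed.

Lemma gstar_involutive A : stable A -> gstar nu (gstar nu A) = A.
Proof.
move=> sA; apply: pred_ext => x; split; last first.
  by apply: sub_gstar_gstar => a; rewrite nu_inv.
move=> x_perp; rewrite sA => y yA; apply: NNPP => xny.
have /x_perp /perp_exists [c yc xc] := nu_preimage_in_gstar yA.
by apply: (xny); exists (nu c).
Qed.

Lemma gstar_join_gtop (nu_compl : forall a, a `|` nu a = \top) A :
  gjoin A (gstar nu A) = gtop.
Proof.
apply: pred_ext => x; split=> // _ y yAA.
have yA : primeX A y by move=> w Aw; apply: yAA; left.
have [c [/= ync yc]] := yAA _ (or_intror (nu_preimage_in_gstar yA)).
by case: (ideal_ntop y); rewrite -(nu_compl c); apply: ideal_join.
Qed.

End Star.
End CanonicalFrame.

Section Complement.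
Context {d : Order.disp_t} {L : tbLatticeType d}.
Variable nu : L -> L.
Hypothesis meetUr : forall a b c : L, a `&` (b `|` c) = (a `&` b) `|` (a `&` c).
Hypothesis nu_meet0 : forall a, a `&` nu a = \bot.
Hypothesis nu_join1 : forall a, a `|` nu a = \top.

Lemma le_of_meet0_join1 (p q r : L) : p `&` q = \bot -> q `|` r = \top -> p <= r.
Proof.
move=> pq0 qr1; have -> : p = p `&` r by rewrite -[p in LHS]meetx1 -qr1 meetUr pq0 join0x.
exact: leIr.
Qed.

Lemma compl_involutive a : nu (nu a) = a.
Proof.
apply: le_anti; apply/andP; split; apply: (le_of_meet0_join1 _ (nu a)).
- by rewrite meetC.
- by rewrite joinC.
- exact: nu_meet0.
- exact: nu_join1.
Qed.

Lemma compl_antitone : {homo nu : a b /~ a <= b}.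
Proof.
move=> a b ba; apply: (le_of_meet0_join1 _ b); last exact: nu_join1.
apply: le_anti; rewrite le0x andbT -(nu_meet0 a) [a `&` _]meetC.
exact: leI2.
Qed.

Lemma compl_bot : nu \bot = \top.
Proof. by rewrite -(nu_join1 \bot) join0x. Qed.

Lemma compl_join a b : nu (a `|` b) = nu a `&` nu b.
Proof.
apply: le_anti; rewrite lexI !compl_antitone ?leUl ?leUr //=.
rewrite -{1}(compl_involutive (nu a `&` nu b)); apply: compl_antitone.
have le_nu c e : e <= nu c -> c <= nu e.
  by move=> /compl_antitone; rewrite compl_involutive.
by rewrite leUx; apply/andP; split; apply: le_nu; [apply: leIl|apply: leIr].
Qed.

End Complement.

Lemma M_axioms_total {d : Order.disp_t} {L : tbLatticeType d} (nu : L -> L) :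
  M_axioms (fun _ : L => True) (fun a b : L => a <= b) Order.meet Order.join
    \bot \top nu ->
  [/\ {homo nu : a b /~ a <= b}, nu \bot = \top &
      forall a b, nu (a `|` b) = nu a `&` nu b].
Proof. by move=> [_ [anti [bot join]]]; split=> // a b; [apply: anti|apply: join]. Qed.

Theorem theorem5p4 (d : Order.disp_t) (L : tbLatticeType d) (nu : L -> L)
    (V : variety) :
  in_variety V (fun _ : L => True) (fun a b : L => (a <= b)%O)
    Order.meet Order.join \bot \top nu ->
  in_variety V (@stable d L) (@gsub d L) (@gmeet d L) (@gjoin d L)
    (@gbot d L) (@gtop d L) (gstar nu).
Proof.
case: V => -[_ HV]; split; try exact: complex_bounded_lattice.
- by case/M_axioms_total: HV => *; apply: complex_M_axioms.
- case: HV => /M_axioms_total [anti bot join] ext.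
  split; first exact: complex_M_axioms.
  by move=> A _; apply: sub_gstar_gstar => // a; apply: ext.
- case: HV => /M_axioms_total [anti bot join] inv.
  split; first exact: complex_M_axioms.
  by move=> A; apply: gstar_involutive => // a; apply: inv.
- case: HV => /M_axioms_total [anti bot join] [inv distr].
  split; first exact: complex_M_axioms.
  split; first by move=> A; apply: gstar_involutive => // a; apply: inv.
  by apply: complex_distributive => a b c; exact: distr.
- case: HV => /M_axioms_total [anti bot join] [inv compl].
  split; first exact: complex_M_axioms.
  split; first by move=> A; apply: gstar_involutive => // a; apply: inv.
  by move=> A _; apply: gstar_meet_gbot => // a; apply: compl.
- case: HV => _ [distr compl].
  have meetUr (a b c : L) : a `&` (b `|` c) = (a `&` b) `|` (a `&` c) by apply: distr.
  have meet0 a : a `&` nu a = \bot by case: (compl a I).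
  have join1 a : a `|` nu a = \top by case: (compl a I).
  have anti := compl_antitone nu meetUr meet0 join1.
  split; first by move=> A _; apply: gstar_stable.
  split; first exact: complex_distributive.
  move=> A _; split; first exact: gstar_meet_gbot.
  apply: gstar_join_gtop => //.
  + exact: compl_bot.
  + exact: compl_join.
  + exact: compl_involutive.
Qed.
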